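(* Let $n \geq 3$ and let $\Omega = \bigcap_{m=0}^q \{u_m \leq 0\} \subset \mathbb{R}^n$ be a compact convex polytope with non-empty interior satisfying the standing assumptions described in the context. Then for every $\varepsilon \in (0,1)$ there exists $\delta > 0$ with the following property: if $0 \leq j < k \leq q$ and there exists a point $x \in \Omega$ with $-\delta \leq u_j(x) \leq 0$ and $-\delta \leq u_k(x) \leq 0$, then $\langle N_j, N_k \rangle \leq \varepsilon$.
   Context: Here $u_0,\dots,u_q$ are non-constant linear (affine) functions on $\mathbb{R}^n$ and $\Omega = \bigcap_{m=0}^q\{u_m\le 0\}$ is compact, convex, with non-empty interior. Standing assumptions: (a) for each $k$, the set $\{u_k>0\}\cap\bigcap_{m\neq k}\{u_m\le 0\}$ is non-empty; (b) the Euclidean gradient of each $u_k$ is a unit vector $N_k\in S^{n-1}$; (c) for $0\le j<k\le q$, if there exists $x\in\Omega$ with $u_j(x)=u_k(x)=0$, then $\langle N_j,N_k\rangle\le 0$ (Euclidean inner product). *)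

From mathcomp Require Import all_boot all_order all_algebra.
From mathcomp Require Import all_classical all_reals all_analysis.
Import numFieldNormedType.Exports.
Set Implicit Arguments. Unset Strict Implicit. Unset Printing Implicit Defensive.
Import Order.TTheory GRing.Theory Num.Theory.
Local Open Scope classical_set_scope.
Local Open Scope ring_scope.

Definition dotp (R : realType) (n : nat) (x y : 'rV[R]_n) : R :=
  \sum_(i < n) x 0 i * y 0 i.

Definition affu (R : realType) (n q : nat) (N : 'I_q.+1 -> 'rV[R]_n)
  (c : 'I_q.+1 -> R) (k : 'I_q.+1) (x : 'rV[R]_n) : R :=
  dotp (N k) x + c k.

Definition Omega (R : realType) (n q : nat) (N : 'I_q.+1 -> 'rV[R]_n)
  (c : 'I_q.+1 -> R) : set 'rV[R]_n :=
  [set x | forall m : 'I_q.+1, affu N c m x <= 0].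

(* Proof idea: for a fixed pair j < k with <N_j, N_k> > eps, hypothesis (c) says
   u_j and u_k have no common zero on Omega, so the continuous function
   -u_j - u_k is positive on the compact set Omega and hence bounded below by
   some d > 0 there; no point of Omega is then (d/3)-close to both faces.  Taking
   the minimum of these radii over the finitely many pairs gives delta. *)

From mathcomp Require Import all_boot all_order all_algebra.
From mathcomp Require Import all_classical all_reals all_analysis.
From mathcomp Require Import lra.
Import numFieldNormedType.Exports.
Set Implicit Arguments.
Unset Strict Implicit.
Unset Printing Implicit Defensive.
Import Order.TTheory GRing.Theory Num.Theory.
Local Open Scope classical_set_scope.
Local Open Scope ring_scope.

Lemma continuous_sum (K : numFieldType) (V : normedModType K)
    (T : topologicalType) (I : finType) (F : I -> T -> V) :
  (forall i, continuous (F i)) -> continuous (fun x => \sum_i F i x).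
Proof.
move=> Fc; rewrite -fct_sumE.
apply: (big_ind (fun f : T -> V => continuous f)) => [|f g fc gc x|i _].
- exact: cst_continuous.
- exact: continuousD (fc x) (gc x).
- exact: Fc.
Qed.

Lemma dotp_continuous (R : realType) (n : nat) (v : 'rV[R]_n) :
  continuous (dotp v).
Proof.
apply: (@continuous_sum _ R^o) => i x.
by apply: continuousM; [apply: cst_continuous | apply: coord_continuous].
Qed.

Lemma affu_continuous (R : realType) (n q : nat) (N : 'I_q.+1 -> 'rV[R]_n)
    (c : 'I_q.+1 -> R) (k : 'I_q.+1) :
  continuous (affu N c k).
Proof.
by move=> x; apply: continuousD; [apply: dotp_continuous | apply: cst_continuous].
Qed.

Lemma compact_pos_lbound (T : topologicalType) (R : realType)
    (K : set T) (h : T -> R) :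
  compact K -> {within K, continuous h} -> (forall x, K x -> 0 < h x) ->
  exists2 d, 0 < d & forall x, K x -> d <= h x.
Proof.
move=> cK hc hpos.
have [[x0 Kx0]|K0] := pselect (K !=set0); last first.
  by exists 1 => // x Kx; exfalso; apply: K0; exists x.
have [xm /set_mem Kxm hmin] := compact_EVT_min (ex_intro _ x0 Kx0) cK hc.
by exists (h xm) => [|x Kx]; [apply: hpos | apply/hmin/mem_set].
Qed.

Lemma fin_forall_exists_pos (R : realDomainType) (I : finType)
    (P : I -> R -> Prop) :
  (forall i d d', 0 < d' <= d -> P i d -> P i d') ->
  (forall i, exists2 d, 0 < d & P i d) ->
  exists2 d, 0 < d & forall i, P i d.
Proof.
move=> Pmono Pex.
have /choice[d Pd] : forall i, exists d, 0 < d /\ P i d.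
  by move=> i; have [d d_gt0 Pid] := Pex i; exists d.
have min_gt0 : 0 < \big[Num.min/1]_i d i.
  by apply: lt_bigmin => [|i _]; [exact: ltr01 | case: (Pd i)].
exists (\big[Num.min/1]_i d i) => // i.
by case: (Pd i) => _; apply: Pmono; rewrite min_gt0 bigmin_le.
Qed.

Lemma compact_nonpos_gap (T : topologicalType) (R : realType)
    (K : set T) (f g : T -> R) :
  compact K -> continuous f -> continuous g ->
  (forall x, K x -> f x <= 0 /\ g x <= 0) ->
  ~ (exists x, K x /\ f x = 0 /\ g x = 0) ->
  exists2 d, 0 < d & forall x, K x -> - d <= f x -> - d <= g x -> False.
Proof.
move=> cK fc gc fg_le0 no_common_zero.
pose h x := - f x - g x.
have hc : {within K, continuous h}.
  apply: continuous_subspaceT => x.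
  apply: (@continuousD _ R^o _ (fun y => - f y)).
  - exact: continuousN (fc x).
  - exact: continuousN (gc x).
have hpos x : K x -> 0 < h x.
  move=> Kx; have [] := fg_le0 x Kx; rewrite /h.
  rewrite !le_eqVlt => /orP[/eqP f0|fn] /orP[/eqP g0|gn]; try lra.
  by exfalso; apply: no_common_zero; exists x.
have [d d_gt0 hd] := compact_pos_lbound cK hc hpos.
exists (d / 3) => [|x Kx fx gx]; first lra.
by have := hd x Kx; rewrite /h; lra.
Qed.

Lemma faces_near_dotp_le (R : realType) (n q : nat)
    (N : 'I_q.+1 -> 'rV[R]_n) (c : 'I_q.+1 -> R) (eps : R) :
  compact (Omega N c) ->
  (forall j k : 'I_q.+1, (j < k)%N ->
      (exists x, Omega N c x /\ affu N c j x = 0 /\ affu N c k x = 0) ->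
      dotp (N j) (N k) <= 0) ->
  0 < eps -> forall j k : 'I_q.+1, (j < k)%N ->
  exists2 d, 0 < d & forall x, Omega N c x ->
    - d <= affu N c j x -> - d <= affu N c k x -> dotp (N j) (N k) <= eps.
Proof.
move=> Omega_compact obtuse eps_gt0 j k jk.
have [le_eps|gt_eps] := lerP (dotp (N j) (N k)) eps; first by exists 1.
have nonpos x : Omega N c x -> affu N c j x <= 0 /\ affu N c k x <= 0.
  by move=> Ox; split; apply: Ox.
have [|d d_gt0 gap] := compact_nonpos_gap Omega_compact
  (@affu_continuous _ _ _ N c j) (@affu_continuous _ _ _ N c k) nonpos.
  by move=> /(obtuse _ _ jk); lra.
by exists d => // x Ox uj uk; exfalso; apply: gap Ox uj uk.
Qed.

Theorem lemma2p2 (R : realType) (n q : nat)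
  (N : 'I_q.+1 -> 'rV[R]_n) (c : 'I_q.+1 -> R) :
  (3 <= n)%N ->
  (* Omega compact, convex, with non-empty interior *)
  compact (Omega N c) -> convex_set (Omega N c) -> (Omega N c)° !=set0 ->
  (* (a) *)
  (forall k : 'I_q.+1, exists x : 'rV[R]_n,
      0 < affu N c k x /\ forall m : 'I_q.+1, m != k -> affu N c m x <= 0) ->
  (* (b) each gradient N_k is a unit vector *)
  (forall k : 'I_q.+1, dotp (N k) (N k) = 1) ->
  (* (c) *)
  (forall j k : 'I_q.+1, (j < k)%N ->
      (exists x, Omega N c x /\ affu N c j x = 0 /\ affu N c k x = 0) ->
      dotp (N j) (N k) <= 0) ->
  forall eps : R, 0 < eps < 1 ->
  exists delta : R, 0 < delta /\
    forall j k : 'I_q.+1, (j < k)%N ->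
      (exists x, Omega N c x /\ - delta <= affu N c j x <= 0
                             /\ - delta <= affu N c k x <= 0) ->
      dotp (N j) (N k) <= eps.
Proof.
move=> _ Omega_compact _ _ _ _ obtuse eps /andP[eps_gt0 _].
pose P (jk : 'I_q.+1 * 'I_q.+1) (d : R) := forall x, (jk.1 < jk.2)%N ->
  Omega N c x -> - d <= affu N c jk.1 x -> - d <= affu N c jk.2 x ->
  dotp (N jk.1) (N jk.2) <= eps.
have [|[j k]|d d_gt0 Pd] := @fin_forall_exists_pos R _ P.
- move=> jk d d' /andP[_ le_d'd] Pjk x jk_lt Ox uj uk.
  have le_opp : - d <= - d' by rewrite lerN2.
  by apply: Pjk => //; [exact: le_trans le_opp uj | exact: le_trans le_opp uk].
- have [jk|kj] := boolP (j < k)%N; last by exists 1 => // x /= jk; rewrite jk in kj.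
  have [d d_gt0 hd] := faces_near_dotp_le Omega_compact obtuse eps_gt0 jk.
  by exists d => // x _; apply: hd.
exists d; split => // j k jk [x [Ox [/andP[uj _] /andP[uk _]]]].
exact: (Pd (j, k) x).
Qed.
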